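(* Let a countable group $G$ act on a set $X$, let $\Phi=(\ell,\phi,\mathcal{Z},\Gamma,\mathcal{H})$ be a chart for $G$, let $0<\epsilon<1$, let $A\subseteq\mathbb{Z}^\ell\times\Gamma$ be a centered rectangle, and let $E$ be a $(\Phi,A,\epsilon)$-rectangular equivalence relation on $X$. Let $U$ be an $E$-class meeting $X^{\mathcal{H}}$, let $y\in X^{\mathcal{H}}$, and let $M>0$ with $M\le 2^{22\ell}-8$ be such that $\phi(M\cdot A)\cdot y$ meets $U$. Then there are $v\in\mathrm{dom}(\phi)$, a rectangle $B\subseteq\mathbb{Z}^\ell\times\Gamma$ and $\delta>0$ such that $\phi(v)\cdot y\in X^{\mathcal{H}}$, $U$ is $(\Phi,\delta)$-roughly $B$ at $\phi(v)\cdot y$, $A\sqsubseteq B$, $2\delta\cdot B\sqsubseteq\epsilon\cdot A$, and $2^{22\ell}\cdot B\subseteq\mathrm{dom}(\phi)$. Moreover $U$ is $(\Phi,2\delta)$-roughly $B+v$ at $y$.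
   Context: Rectangles: Let $\Gamma$ be a finite additive abelian group with identity $0_\Gamma$ and $\ell\in\mathbb{N}$. Elements $v$ of $\mathbb{R}^\ell\times\Gamma$ have coordinates $v_1,\dots,v_\ell\in\mathbb{R}$, $v_{\ell+1}\in\Gamma$; $\mathbf{0}$ has first $\ell$ coordinates $0$ and last coordinate $0_\Gamma$. For $\lambda\in\mathbb{R}$, $\lambda\cdot v=(\lambda v_1,\dots,\lambda v_\ell,v_{\ell+1})$. $\mathrm{Rec}(a)=\{b\in\mathbb{Z}^\ell\times\Gamma: -|a_i|\le b_i\le|a_i|,\ 1\le i\le\ell\}$. A rectangle is a set $c+\mathrm{Rec}(a)$ with $c,a\in\mathbb{Z}^\ell\times\Gamma$; it can be written uniquely with $c\in\mathbb{Z}^\ell\times\{0_\Gamma\}$ (center) and $a\in\mathbb{N}^\ell\times\{0_\Gamma\}$ (radius vector $\mathrm{L}(A)$, entries $\mathrm{L}_i(A)$). Centered means center $\mathbf{0}$. $A\sqsubseteq B$ means $\mathrm{L}_i(A)\le\mathrm{L}_i(B)$ for all $i$. For $\lambda>0$, $\lambda\cdot A=c+\mathrm{Rec}(\lambda\cdot\mathrm{L}(A))$ with $c$ the center of $A$. Sums of sets/vectors are elementwise. Charts: a chart for $G$ is $\Phi=(\ell,\phi,\mathcal{Z},\Gamma,\mathcal{H})$ with $\mathcal{H}$ a finite collection of pairwise conjugate subgroups of $G$, $\Gamma$ finite abelian, $\mathcal{Z}$ a centered rectangle with all $\mathrm{L}_i(\mathcal{Z})>0$, $\phi$ an injective map into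 $G$ with $\mathrm{dom}(\phi)$ a centered rectangle containing $3\cdot\mathcal{Z}$, $\phi(\mathbf{0})=1_G$, and for all $r,s\in\mathrm{dom}(\phi)$, $H\in\mathcal{H}$: $\phi(r)H=\phi(s)H\Rightarrow r=s$; $r+s+\mathcal{Z}\subseteq\mathrm{dom}(\phi)\Rightarrow\exists z\in\mathcal{Z}:\phi(r)\phi(s)H=\phi(r+s+z)H$; $r-s+\mathcal{Z}\subseteq\mathrm{dom}(\phi)\Rightarrow\exists z\in\mathcal{Z}:\phi(r)\phi(s)^{-1}H=\phi(r-s+z)H$; $-r+s+\mathcal{Z}\subseteq\mathrm{dom}(\phi)\Rightarrow\exists z\in\mathcal{Z}:\phi(r)^{-1}\phi(s)H=\phi(-r+s+z)H$; $-s+\mathcal{Z}\subseteq\mathrm{dom}(\phi)\Rightarrow\exists z\in\mathcal{Z}:\phi(s)^{-1}H=\phi(-s+z)H$. $\phi(S)\cdot x=\{\phi(s)\cdot x:s\in S\}$. $X^{\mathcal{H}}=\{x\in X:\mathrm{Stab}(x)\in\mathcal{H}\}$. Rough rectangles: for a rectangle $B$ with $2\cdot B\subseteq\mathrm{dom}(\phi)$, $x\in X^{\mathcal{H}}$, $0<\delta<1$, a set $R\subseteq X$ is $(\Phi,\delta)$-roughly $B$ at $x$ if $2\cdot\mathcal{Z}\sqsubseteq\delta\cdot B$ and $\phi((1-\delta)\cdot B)\cdot x\subseteq R\subseteq\phi((1+\delta)\cdot B)\cdot x$. Rectangular: for $A$ centered and $0<\epsilon<1$, an equivalence relation $E$ on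 $X$ is $(\Phi,A,\epsilon)$-rectangular if every $E$-class not meeting $X^{\mathcal{H}}$ is a singleton, and for every $E$-class $U$ meeting $X^{\mathcal{H}}$ there are $\delta>0$, a rectangle $B$ and a point $x\in X^{\mathcal{H}}$ such that $U$ is $(\Phi,\delta)$-roughly $B$ at $x$, with $A\sqsubseteq B$, $2^{22\ell}\cdot B\subseteq\mathrm{dom}(\phi)$, and $2\delta\cdot B\sqsubseteq\epsilon\cdot A$. *)

From HB Require Import structures.
From mathcomp Require Import all_boot all_order all_algebra.
From mathcomp Require Import reals.

Set Implicit Arguments.
Unset Strict Implicit.
Unset Printing Implicit Defensive.

Import Order.TTheory GRing.Theory Num.Theory.
Local Open Scope ring_scope.

Section GroupDefs.
Variable G : groupType.
Local Open Scope group_scope.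

Definition countable_group : Prop := exists f : G -> nat, injective f.

Definition is_action (X : Type) (act : G -> X -> X) : Prop :=
  (forall x, act 1 x = x) /\ (forall g h x, act (g * h) x = act g (act h x)).

Definition is_subgroup (H : G -> Prop) : Prop :=
  H 1 /\ (forall g h, H g -> H h -> H (g * h)) /\ (forall g, H g -> H g^-1).

Definition conjugate_subgroups (H H' : G -> Prop) : Prop :=
  exists g : G, forall h, H' h <-> H (g^-1 * h * g).

Definition lcoset (g : G) (H : G -> Prop) : G -> Prop :=
  fun k => exists h, H h /\ k = g * h.

Definition Stab (X : Type) (act : G -> X -> X) (x : X) : G -> Prop :=
  fun g => act g x = x.

Definition XH (X : Type) (act : G -> X -> X) (k : nat) (Hs : 'I_k -> G -> Prop)
  (x : X) : Prop := exists j : 'I_k, Stab act x = Hs j.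

End GroupDefs.

(* elements of Z^l x Gamma; coordinate i <= l is v.1 ord0 i, last is v.2 *)
Definition vec (l : nat) (Gam : finZmodType) := ('rV[int]_l * Gam)%type.

Definition set_sub (T : Type) (S1 S2 : T -> Prop) := forall t, S1 t -> S2 t.

(* c + Rec(a) with c in Z^l (Gamma component 0) and a real vector a *)
Definition rectR (R : realType) (l : nat) (Gam : finZmodType)
  (c : 'rV[int]_l) (a : 'I_l -> R) : vec l Gam -> Prop :=
  fun b => forall i : 'I_l,
    - `|a i| <= ((b.1 ord0 i - c ord0 i)%:~R : R) <= `|a i|.

(* A rectangle, in its unique normal form c + Rec(L) with c in Z^l x {0},
   L in N^l x {0}. *)
Record rect (l : nat) := Rect { rcenter : 'rV[int]_l ; rrad : 'I_l -> nat }.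

Definition rset (R : realType) (l : nat) (Gam : finZmodType) (B : rect l)
  : vec l Gam -> Prop := @rectR R l Gam (rcenter B) (fun i => ((rrad B i)%:R : R)).

Arguments rset R {l} Gam B.

Definition centered (l : nat) (B : rect l) : Prop := rcenter B = 0.

Definition rle (l : nat) (A B : rect l) : Prop := forall i, (rrad A i <= rrad B i)%N.

(* lambda . B = c + Rec(lambda L(B)); as a rectangle its radius vector is
   the integer part of lambda L(B) (see rscale_set below). *)
Definition rscale (R : realType) (l : nat) (lam : R) (B : rect l) : rect l :=
  Rect (rcenter B) (fun i => Num.truncn (lam * (rrad B i)%:R)).

Definition rtrans (l : nat) (Gam : finZmodType) (B : rect l) (v : vec l Gam) : rect l :=
  Rect (rcenter B + v.1) (rrad B).

Section Charts.
Variables (R : realType) (G : groupType) (l : nat) (Gam : finZmodType).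

(* dom(phi) = rset D; phi is given as a total function whose values
   outside rset D are irrelevant. *)
Definition is_chart (phi : vec l Gam -> G) (Zr D : rect l) (k : nat)
  (Hs : 'I_k -> G -> Prop) : Prop :=
  let dom := rset R Gam D in
  let Zs := rset R Gam Zr in
  [/\ (forall j, is_subgroup (Hs j)) /\
        (forall j j', conjugate_subgroups (Hs j) (Hs j')),
      centered Zr /\ (forall i, (0 < rrad Zr i)%N),
      centered D /\ set_sub (rset R Gam (rscale (3%:R : R) Zr)) dom,
      phi 0 = 1%g &
      (forall r s, dom r -> dom s -> phi r = phi s -> r = s) /\
      (forall r s j, dom r -> dom s ->
        [/\ (lcoset (phi r) (Hs j) = lcoset (phi s) (Hs j) -> r = s),
            (set_sub (fun t => exists2 z, Zs z & t = (r + s + z)) dom ->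
              exists2 z, Zs z &
                lcoset (phi r * phi s)%g (Hs j) = lcoset (phi (r + s + z)) (Hs j)),
            (set_sub (fun t => exists2 z, Zs z & t = (r - s + z)) dom ->
              exists2 z, Zs z &
                lcoset (phi r * (phi s)^-1)%g (Hs j) = lcoset (phi (r - s + z)) (Hs j)),
            (set_sub (fun t => exists2 z, Zs z & t = (- r + s + z)) dom ->
              exists2 z, Zs z &
                lcoset ((phi r)^-1 * phi s)%g (Hs j) = lcoset (phi (- r + s + z)) (Hs j)) &
            (set_sub (fun t => exists2 z, Zs z & t = (- s + z)) dom ->
              exists2 z, Zs z &
                lcoset ((phi s)^-1)%g (Hs j) = lcoset (phi (- s + z)) (Hs j))])].

(* phi(S) . x  (only points of dom(phi) are mapped) *)
Definition phi_img (X : Type) (act : G -> X -> X) (phi : vec l Gam -> G)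
  (D : rect l) (S : vec l Gam -> Prop) (x : X) : X -> Prop :=
  fun p => exists s, [/\ S s, rset R Gam D s & p = act (phi s) x].

(* R0 is (Phi, delta)-roughly B at x, including the standing requirements
   2.B ⊆ dom(phi), x ∈ X^H, 0 < delta < 1 of the definition. *)
Definition roughly (X : Type) (act : G -> X -> X) (phi : vec l Gam -> G)
  (Zr D : rect l) (k : nat) (Hs : 'I_k -> G -> Prop)
  (delta : R) (B : rect l) (x : X) (R0 : X -> Prop) : Prop :=
  [/\ set_sub (rset R Gam (rscale (2%:R : R) B)) (rset R Gam D),
      XH act Hs x, 0 < delta < 1,
      rle (rscale (2%:R : R) Zr) (rscale delta B) &
      set_sub (phi_img act phi D (rset R Gam (rscale (1 - delta) B)) x) R0 /\
      set_sub R0 (phi_img act phi D (rset R Gam (rscale (1 + delta) B)) x)].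

Definition is_equiv (X : Type) (E : X -> X -> Prop) : Prop :=
  (forall x, E x x) /\ (forall x y, E x y -> E y x) /\
  (forall x y z, E x y -> E y z -> E x z).

Definition is_class (X : Type) (E : X -> X -> Prop) (U : X -> Prop) : Prop :=
  exists x, U = E x.

Definition meets (X : Type) (S T : X -> Prop) : Prop := exists x, S x /\ T x.

Definition rectangular (X : Type) (act : G -> X -> X) (phi : vec l Gam -> G)
  (Zr D : rect l) (k : nat) (Hs : 'I_k -> G -> Prop)
  (A : rect l) (eps : R) (E : X -> X -> Prop) : Prop :=
  is_equiv E /\
  (forall U, is_class E U -> ~ meets U (XH act Hs) ->
     exists x, U = (fun y => y = x)) /\
  (forall U, is_class E U -> meets U (XH act Hs) ->
     exists delta : R, exists B : rect l, exists x : X,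
       [/\ 0 < delta /\ XH act Hs x, roughly act phi Zr D Hs delta B x U,
           rle A B,
           set_sub (rset R Gam (rscale ((2%:R : R) ^+ (22 * l)) B)) (rset R Gam D) &
           rle (rscale (2%:R * delta) B) (rscale eps A)]).

End Charts.

(* Let U be (Phi, delta)-roughly B at x. A point phi(s).y of U with s in M.A is also
   phi(t).x with t in (1+delta).B, so the chart composition rules give
   x = phi(v).y with v = -t + s + z, z in Z. Composing once more with phi(v) moves the
   inner and outer approximations of U from base point x to base point y, each time
   with an error in Z; since 2.Z is below delta.B, doubling delta absorbs it. All
   domain conditions are coordinatewise integer bounds, and 2^(22l).B inside dom(phi)
   leaves room for M.A plus 8 copies of B. *)

From HB Require Import structures.
From mathcomp Require Import all_boot all_order all_algebra.
From mathcomp Require Import reals.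
From mathcomp Require Import zify ring lra.
Set Implicit Arguments.
Unset Strict Implicit.
Unset Printing Implicit Defensive.

Import Order.TTheory GRing.Theory Num.Theory.
Local Open Scope ring_scope.

Section Rectangles.
Variables (R : realType) (l : nat) (Gam : finZmodType).
Implicit Types (A B D : rect l) (p : vec l Gam).

Lemma rsetP B p :
  rset R Gam B p <-> forall i, `|p.1 ord0 i - rcenter B ord0 i| <= (rrad B i)%:Z.
Proof.
rewrite /rset /rectR; split=> h i; move: (h i);
  by rewrite normr_nat -ler_norml -intr_norm pmulrn ler_int.
Qed.

(* Stated at type [int] so that [lia] recognises the sums that [mxE] would produce. *)
Lemma rowD_entry (a b : 'rV[int]_l) i : (a + b) ord0 i = a ord0 i + b ord0 i :> int.
Proof. by rewrite mxE. Qed.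

Lemma rowN_entry (a : 'rV[int]_l) i : (- a) ord0 i = - a ord0 i :> int.
Proof. by rewrite mxE. Qed.

Lemma rset_centeredP B p : centered B ->
  rset R Gam B p <-> forall i, `|p.1 ord0 i| <= (rrad B i)%:Z.
Proof. by move=> hB; rewrite rsetP hB; split=> h i; move: (h i); rewrite mxE subr0. Qed.

Lemma subset_rset_centered B D : centered D ->
  set_sub (rset R Gam B) (rset R Gam D) <->
  forall i, `|rcenter B ord0 i| + (rrad B i)%:Z <= (rrad D i)%:Z.
Proof.
move=> hD; split=> [hBD i | hBD p /rsetP hp]; last first.
  by apply/rsetP => i; move: (hp i) (hBD i); rewrite hD mxE; lia.
pose sgL := if 0 <= rcenter B ord0 i then (rrad B i)%:Z else - (rrad B i)%:Z.
pose q : vec l Gam := (\row_j (rcenter B ord0 j + (j == i)%:R * sgL), 0).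
have /hBD/rsetP/(_ i) : rset R Gam B q.
  by apply/rsetP => j; rewrite mxE /sgL; case: eqP => [->|_]; case: ifP; lia.
by rewrite !mxE hD mxE eqxx /sgL; case: ifP; lia.
Qed.

Lemma rrad_rscale_nat (n : nat) B i : rrad (rscale (n%:R : R) B) i = (n * rrad B i)%N.
Proof. by rewrite /= -natrM natrK. Qed.

Lemma rscale_le (lam mu : R) B : lam <= mu -> rle (rscale lam B) (rscale mu B).
Proof. by move=> h i; apply/le_truncn/ler_wpM2r. Qed.

Lemma rrad_rscale_le_nat (lam : R) (n : nat) B i :
  lam <= n%:R -> (rrad (rscale lam B) i <= n * rrad B i)%N.
Proof. by move=> h; rewrite -rrad_rscale_nat; apply: rscale_le. Qed.

Lemma rrad_rscaleD (lam mu : R) B i : 0 <= lam -> 0 <= mu ->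
  (rrad (rscale lam B) i + rrad (rscale mu B) i <= rrad (rscale (lam + mu) B) i)%N.
Proof.
move=> hlam hmu; have hL : (0 : R) <= (rrad B i)%:R by [].
rewrite /= truncn_ge_nat ?mulr_ge0 ?addr_ge0 // natrD mulrDl.
by apply: lerD; rewrite truncn_le mulr_ge0.
Qed.

Lemma rrad_rscale_gap (M : R) (m n : nat) A B i : 0 <= M -> M + m%:R <= n%:R ->
  rle A B -> (rrad (rscale M A) i + m * rrad B i <= n * rrad B i)%N.
Proof.
move=> hM hMn /(_ i) hAB; rewrite -(ler_nat R) natrD !natrM /=.
have hMa : (Num.truncn (M * (rrad A i)%:R))%:R <= M * (rrad A i)%:R.
  by rewrite truncn_le mulr_ge0.
have hMAB : M * (rrad A i)%:R <= M * (rrad B i)%:R by rewrite ler_wpM2l // ler_nat.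
have hB : (0 : R) <= (rrad B i)%:R by [].
nra.
Qed.

Lemma rscale_lt1 (mu eps : R) A B i : 0 <= mu -> 0 <= eps < 1 -> rle A B ->
  rle (rscale mu B) (rscale eps A) -> (0 < rrad (rscale mu B) i)%N -> mu < 1.
Proof.
move=> hmu /andP[he0 he1] /(_ i) hAB /(_ i) /= hBA hpos.
have ha : (0 < rrad A i)%N.
  by case: (posnP (rrad A i)) hBA => // ->; rewrite mulr0 truncn0; lia.
have hea : (Num.truncn (eps * (rrad A i)%:R) < rrad A i)%N.
  by rewrite truncn_lt_nat ?mulr_ge0 // gtr_pMl // ltr0n.
have : (Num.truncn (mu * (rrad B i)%:R) < rrad B i)%N by lia.
rewrite truncn_lt_nat ?mulr_ge0 // -[X in _ < X]mul1r ltr_pM2r //.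
by rewrite ltr0n; lia.
Qed.

End Rectangles.

Arguments rsetP {R l Gam B p}.
Arguments rset_centeredP {R l Gam B p}.
Arguments subset_rset_centered {R l Gam B D}.

Section Actions.
Variables (G : groupType) (X : Type) (act : G -> X -> X).
Hypothesis hact : is_action act.

Lemma act_invK (g : G) (x : X) : act g^-1 (act g x) = x.
Proof. by rewrite -hact.2 mulVg hact.1. Qed.

Lemma act_eq_lcoset (x : X) (H : G -> Prop) (a b : G) :
  Stab act x = H -> lcoset a H = lcoset b H -> act a x = act b x.
Proof.
move=> <- eab; have : lcoset a (Stab act x) a by exists 1%g; rewrite mulg1 /Stab hact.1.
by rewrite eab => -[h [hx ->]]; rewrite hact.2 hx.
Qed.

End Actions.

Arguments act_invK {G X act} hact {g x}.
Arguments act_eq_lcoset {G X act} hact {x H a b}.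

Section Charts.
Variables (R : realType) (G : groupType) (X : Type) (act : G -> X -> X).
Hypothesis hact : is_action act.
Variables (l : nat) (Gam : finZmodType) (phi : vec l Gam -> G) (Zr D : rect l).
Variables (k : nat) (Hs : 'I_k -> G -> Prop).
Hypothesis hchart : is_chart R phi Zr D Hs.

Local Notation dom := (rset R Gam D).
Local Notation Zs := (rset R Gam Zr).

Lemma chart_domP p : dom p <-> forall i, `|p.1 ord0 i| <= (rrad D i)%:Z.
Proof. by have [_ _ [hD _] _ _] := hchart; apply: rset_centeredP. Qed.

Lemma chart_subset_domP B : set_sub (rset R Gam B) dom <->
  forall i, `|rcenter B ord0 i| + (rrad B i)%:Z <= (rrad D i)%:Z.
Proof. by have [_ _ [hD _] _ _] := hchart; apply: subset_rset_centered. Qed.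

Lemma chart_Zs_le z i : Zs z -> `|z.1 ord0 i| <= (rrad Zr i)%:Z.
Proof. by have [_ [hZ _] _ _ _] := hchart; move/(rset_centeredP hZ). Qed.

Lemma chart_act_mul j r s y : Stab act y = Hs j -> dom r -> dom s ->
  set_sub (fun t => exists2 z, Zs z & t = r + s + z) dom ->
  exists2 z, Zs z & act (phi r) (act (phi s) y) = act (phi (r + s + z)) y.
Proof.
case: hchart => _ _ _ _ [_ hax] hy hr hs hsub.
have [_ hmul _ _ _] := hax r s j hr hs; have [z hz hcos] := hmul hsub.
by exists z; rewrite // -hact.2 (act_eq_lcoset hact hy hcos).
Qed.

Lemma chart_act_mulV j r s y : Stab act (act (phi s) y) = Hs j -> dom r -> dom s ->
  set_sub (fun t => exists2 z, Zs z & t = r - s + z) dom ->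
  exists2 z, Zs z & act (phi r) y = act (phi (r - s + z)) (act (phi s) y).
Proof.
case: hchart => _ _ _ _ [_ hax] hx hr hs hsub.
have [_ _ hmul _ _] := hax r s j hr hs; have [z hz hcos] := hmul hsub.
by exists z; rewrite // -(act_eq_lcoset hact hx hcos) hact.2 (act_invK hact).
Qed.

Lemma chart_act_Vmul j r s y : Stab act y = Hs j -> dom r -> dom s ->
  set_sub (fun t => exists2 z, Zs z & t = - r + s + z) dom ->
  exists2 z, Zs z & act (phi (- r + s + z)) y = act (phi r)^-1 (act (phi s) y).
Proof.
case: hchart => _ _ _ _ [_ hax] hy hr hs hsub.
have [_ _ _ hmul _] := hax r s j hr hs; have [z hz hcos] := hmul hsub.
by exists z; rewrite // -(act_eq_lcoset hact hy hcos) hact.2.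
Qed.
Lemma roughly_translate y v B (delta : R) U :
  XH act Hs y -> dom v -> 2%:R * delta < 1 ->
  set_sub (rset R Gam (rscale (3%:R : R) (rtrans B v))) dom ->
  roughly act phi Zr D Hs delta B (act (phi v) y) U ->
  roughly act phi Zr D Hs (2%:R * delta) (rtrans B v) y U.
Proof.
move=> [j hy] hv hd2 h3 [h2B [j' hx] /andP[hd0 _] hZB [hin hout]].
have {}h2B i : `|rcenter B ord0 i| + (2 * rrad B i)%:Z <= (rrad D i)%:Z.
  by have := (chart_subset_domP _).1 h2B i; rewrite rrad_rscale_nat.
have {}h3 i : `|rcenter B ord0 i + v.1 ord0 i| + (3 * rrad B i)%:Z <= (rrad D i)%:Z.
  by have := (chart_subset_domP _).1 h3 i; rewrite rrad_rscale_nat /= rowD_entry.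
have {}hZB i : (2 * rrad Zr i <= rrad (rscale delta B) i)%N.
  by have := hZB i; rewrite rrad_rscale_nat.
have rd i : (rrad (rscale delta B) i <= 1 * rrad B i)%N.
  by apply: rrad_rscale_le_nat; lra.
have rin1 i : (rrad (rscale (1 - 2%:R * delta) B) i <= 1 * rrad B i)%N.
  by apply: rrad_rscale_le_nat; lra.
have rin i : (rrad (rscale (1 - 2%:R * delta) B) i + rrad (rscale delta B) i
              <= rrad (rscale (1 - delta) B) i)%N.
  rewrite [1 - delta](_ : _ = (1 - 2%:R * delta) + delta); last ring.
  by apply: rrad_rscaleD; lra.
have rout i : (rrad (rscale (1 + delta) B) i + rrad (rscale delta B) i
              <= rrad (rscale (1 + 2%:R * delta) B) i)%N.
  rewrite [1 + 2%:R * delta](_ : _ = (1 + delta) + delta); last ring.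
  by apply: rrad_rscaleD; lra.
have rout2 i : (rrad (rscale (1 + delta) B) i <= 2 * rrad B i)%N.
  by apply: rrad_rscale_le_nat; lra.
split.
- apply/chart_subset_domP => i; rewrite rrad_rscale_nat /= rowD_entry.
  by move: (h3 i); lia.
- by exists j.
- by apply/andP; split; lra.
- move=> i; rewrite rrad_rscale_nat; apply: leq_trans (hZB i) _.
  by apply: rscale_le; lra.
split.
- move=> _ [w [/rsetP hw hwD ->]].
  have hcont : set_sub (fun t => exists2 z, Zs z & t = w - v + z) dom.
    move=> _ [z hz ->]; apply/chart_domP => i.
    move: (hw i) (chart_Zs_le i hz) (h2B i) (hZB i) (rd i) (rin1 i).
    rewrite /= !(rowD_entry, rowN_entry); lia.
  have [z hz hwx] := chart_act_mulV hx hwD hv hcont.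
  apply: hin; exists (w - v + z); split; last by rewrite hwx.
  + apply/rsetP => i; move: (hw i) (chart_Zs_le i hz) (hZB i) (rin i).
    rewrite /= !(rowD_entry, rowN_entry); lia.
  + exact: hcont _ (ex_intro2 _ _ z hz erefl).
- move=> q /hout [t [/rsetP ht htD ->]].
  have hcont : set_sub (fun t' => exists2 z, Zs z & t' = t + v + z) dom.
    move=> _ [z hz ->]; apply/chart_domP => i.
    move: (ht i) (chart_Zs_le i hz) (h3 i) (hZB i) (rd i) (rout2 i).
    rewrite /= !(rowD_entry, rowN_entry); lia.
  have [z hz htx] := chart_act_mul hy htD hv hcont.
  exists (t + v + z); split; last by rewrite htx.
  + apply/rsetP => i; move: (ht i) (chart_Zs_le i hz) (hZB i) (rout i).
    rewrite /= !(rowD_entry, rowN_entry); lia.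
  + exact: hcont _ (ex_intro2 _ _ z hz erefl).
Qed.

Lemma roughly_base_point (n : nat) y s (M delta : R) A B x U :
  XH act Hs y -> centered A -> 0 <= M -> M + 8%:R <= (n%:R : R) -> rle A B ->
  set_sub (rset R Gam (rscale (n%:R : R) B)) dom ->
  rset R Gam (rscale M A) s -> dom s ->
  roughly act phi Zr D Hs delta B x U -> U (act (phi s) y) ->
  exists v, [/\ dom v, act (phi v) y = x &
                set_sub (rset R Gam (rscale (3%:R : R) (rtrans B v))) dom].
Proof.
move=> [j hy] hA hM hMn hAB hnB hsA hsD [_ _ /andP[_ hd1] hZB [_ hout]] hsU.
have [t [/rsetP ht htD htx]] := hout _ hsU.
have {}hnB i : `|rcenter B ord0 i| + (n * rrad B i)%N <= (rrad D i)%:Z.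
  by have := (chart_subset_domP _).1 hnB i; rewrite rrad_rscale_nat.
have {}hsA i : `|s.1 ord0 i| <= (rrad (rscale M A) i)%:Z.
  exact: (rset_centeredP (B := rscale M A) hA).1 hsA i.
have gap i := rrad_rscale_gap i hM hMn hAB.
have {}hZB i : (2 * rrad Zr i <= rrad (rscale delta B) i)%N.
  by have := hZB i; rewrite rrad_rscale_nat.
have rd i : (rrad (rscale delta B) i <= 1 * rrad B i)%N.
  by apply: rrad_rscale_le_nat; lra.
have rout2 i : (rrad (rscale (1 + delta) B) i <= 2 * rrad B i)%N.
  by apply: rrad_rscale_le_nat; lra.
have hcont : set_sub (fun v => exists2 z, Zs z & v = - t + s + z) dom.
  move=> _ [z hz ->]; apply/chart_domP => i.
  move: (ht i) (hsA i) (chart_Zs_le i hz) (hnB i) (gap i) (hZB i) (rd i) (rout2 i).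
  rewrite /= !(rowD_entry, rowN_entry); lia.
have [z hz hzx] := chart_act_Vmul hy htD hsD hcont.
exists (- t + s + z); split.
- exact: hcont _ (ex_intro2 _ _ z hz erefl).
- by rewrite hzx htx (act_invK hact).
- apply/chart_subset_domP => i; rewrite rrad_rscale_nat.
  move: (ht i) (hsA i) (chart_Zs_le i hz) (hnB i) (gap i) (hZB i) (rd i) (rout2 i).
  rewrite /= !(rowD_entry, rowN_entry); lia.
Qed.

End Charts.

Theorem lemma5p4
  (R : realType) (G : groupType) (X : Type) (act : G -> X -> X)
  (hG : countable_group G) (hact : is_action act)
  (l : nat) (Gam : finZmodType) (phi : vec l Gam -> G) (Zr D : rect l)
  (k : nat) (Hs : 'I_k -> G -> Prop)
  (hchart : is_chart R phi Zr D Hs)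
  (eps : R) (heps : 0 < eps < 1)
  (A : rect l) (hA : centered A)
  (E : X -> X -> Prop) (hE : rectangular act phi Zr D Hs A eps E)
  (U : X -> Prop) (hU : is_class E U) (hUX : meets U (XH act Hs))
  (y : X) (hy : XH act Hs y)
  (M : R) (hM : 0 < M) (hM2 : M <= (2%:R : R) ^+ (22 * l) - 8%:R)
  (hMA : meets (phi_img R act phi D (rset R Gam (rscale M A)) y) U) :
  exists (v : vec l Gam) (B : rect l) (delta : R),
    [/\ rset R Gam D v /\ 0 < delta,
        XH act Hs (act (phi v) y) /\
        roughly act phi Zr D Hs delta B (act (phi v) y) U,
        rle A B /\
        rle (rscale (2%:R * delta) B) (rscale eps A),
        set_sub (rset R Gam (rscale ((2%:R : R) ^+ (22 * l)) B)) (rset R Gam D) &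
        roughly act phi Zr D Hs (2%:R * delta) (rtrans B v) y U].
Proof.
have [_ [_ hrect]] := hE.
have [delta [B [x [[hd0 hx] hrough hAB hBD hBA]]]] := hrect U hU hUX.
have [_ [[s [hsA hsD ->]] hsU]] := hMA.
have hl : (0 < l)%N.
  by rewrite lt0n; apply/eqP => l0; move: hM2; rewrite l0 muln0 expr0; lra.
have hd2 : 2%:R * delta < 1.
  have [_ _ _ hZB _] := hrough; have [_ [_ hZpos] _ _ _] := hchart.
  pose i0 := Ordinal hl.
  apply: (rscale_lt1 (i := i0) _ _ hAB hBA); first by rewrite mulr_ge0 ?ltW.
    by case/andP: heps => /ltW -> ->.
  apply: leq_trans (rscale_le B (_ : delta <= 2%:R * delta) i0); last lra.
  by have := hZB i0; rewrite rrad_rscale_nat; have := hZpos i0; lia.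
have hMn : M + 8%:R <= (2 ^ (22 * l))%:R :> R by rewrite natrX; lra.
have hPB : set_sub (rset R Gam (rscale ((2 ^ (22 * l))%:R : R) B)) (rset R Gam D).
  by rewrite natrX.
have [v [hvD hvx h3]] :=
  roughly_base_point hact hchart hy hA (ltW hM) hMn hAB hPB hsA hsD hrough hsU.
exists v, B, delta; rewrite hvx; split=> //.
by apply: (roughly_translate hact hchart hy hvD hd2 h3); rewrite hvx.
Qed.
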